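(* For $n=3$, at every point of $\mathbb C_3$ one has $\mathcal D_3+[\mathcal D_3,\mathcal D_3]=T\mathbb C_3$. More precisely, $\xi_1,\xi_2,\xi_3,[\xi_1,\xi_2],[\xi_2,\xi_3]$ span the $5$-dimensional tangent space of $\mathbb C_3$ at every point; so $\mathcal D_3$ has growth vector $(3,5)$ everywhere.
   Context: $\mathcal P_3$ is the $6$-dimensional manifold of (nondegenerate) triangles in $\mathbb R^2$. A triangle is encoded by its counterclockwise-ordered side lines $L_i=\{x\cos\alpha_i+y\sin\alpha_i=p_i\}$, $i\in\mathbb Z/3$, with $(\cos\alpha_i,\sin\alpha_i)$ the outer unit normal. For each $i$, let $C_i$ be the tangency point with $L_i$ of the excircle of the triangle opposite to the side on $L_i$. This is the circle tangent to the three lines lying on the triangle's side of $L_{i\pm1}$ and on the opposite side of $L_i$. $\xi_i$ is the vector field given by the infinitesimal counterclockwise rotation of $L_i$ about $C_i$, other sides fixed. In coordinates $\xi_i=\partial_{\alpha_i}+\Phi_i\partial_{p_i}$ with $$\Phi_i=\frac{\cos^2\!\big(\frac{\alpha_i-\alpha_{i-1}}2\big)(p_{i+1}+p_i)-\cos^2\!\big(\frac{\alpha_{i+1}-\alpha_i}2\big)(p_{i-1}+p_i)}{2\sin\!\big(\frac{\alpha_{i+1}-\alpha_{i-1}}2\big)\cos\!\big(\frac{\alpha_i-\alpha_{i-1}}2\big)\cos\!\big(\frac{\alpha_{i+1}-\alpha_i}2\big)}.$$ $\mathcal D_3=\mathrm{span}(\xi_1,\xi_2,\xi_3)$ is tangent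 to the level sets of the perimeter. $\mathbb C_3$ is a level set of the perimeter (triangles of a fixed perimeter), a $5$-dimensional manifold. *)

From Stdlib Require Import Reals Lra Arith.
From Coquelicot Require Import Coquelicot.
Open Scope R_scope.

(* A point of R^6 (coordinates alpha_1,alpha_2,alpha_3,p_1,p_2,p_3 stored at
   indices 0,1,2,3,4,5; other indices are irrelevant).  Side index i is taken
   mod 3 (i = 0,1,2 corresponds to the paper's 1,2,3). *)
Definition pt := nat -> R.

Definition al (x : pt) (i : nat) : R := x (i mod 3)%nat.
Definition pp (x : pt) (i : nat) : R := x (3 + i mod 3)%nat.

(* The manifold P_3 of nondegenerate triangles: the outer normals are in
   counterclockwise order with consecutive angular gaps in (0,pi), and the
   triangle { z | <z, n_i> <= p_i for all i } has nonempty interior. *)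
Definition in_P3 (x : pt) : Prop :=
  sin (al x 1 - al x 0) > 0 /\ sin (al x 2 - al x 1) > 0 /\
  sin (al x 0 - al x 2) > 0 /\
  exists u v : R, forall i : nat, (i < 3)%nat ->
    u * cos (al x i) + v * sin (al x i) < pp x i.

(* Vertex L_i ∩ L_{i+1} (Cramer's rule). *)
Definition vtx_x (x : pt) (i : nat) : R :=
  (pp x i * sin (al x (i+1)) - pp x (i+1) * sin (al x i)) / sin (al x (i+1) - al x i).
Definition vtx_y (x : pt) (i : nat) : R :=
  (cos (al x i) * pp x (i+1) - cos (al x (i+1)) * pp x i) / sin (al x (i+1) - al x i).

(* Perimeter: sum of the lengths of the three sides; the side on L_{i+1}
   joins vertex L_i ∩ L_{i+1} to vertex L_{i+1} ∩ L_{i+2}. *)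
Definition perimeter (x : pt) : R :=
  sum_f_R0 (fun i => sqrt ((vtx_x x (i+1) - vtx_x x i)^2 + (vtx_y x (i+1) - vtx_y x i)^2)) 2.

Definition Phi (i : nat) (x : pt) : R :=
  let a := al x i in let am := al x (i+2) in let ap := al x (i+1) in
  let p := pp x i in let pm := pp x (i+2) in let pn := pp x (i+1) in
  ((cos ((a - am)/2))^2 * (pn + p) - (cos ((ap - a)/2))^2 * (pm + p)) /
  (2 * sin ((ap - am)/2) * cos ((a - am)/2) * cos ((ap - a)/2)).

Definition vfield := pt -> pt.

Definition xi (i : nat) : vfield := fun x k =>
  if Nat.eqb k i then 1 else if Nat.eqb k (3 + i) then Phi i x else 0.

Definition dirD (f : pt -> R) (x v : pt) : R :=
  Derive (fun t => f (fun k => x k + t * v k)) 0.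

Definition bracket (X Y : vfield) : vfield := fun x k =>
  dirD (fun y => Y y k) x (X x) - dirD (fun y => X y k) x (Y x).

Definition gen (j : nat) : vfield :=
  match j with
  | 0 => xi 0 | 1 => xi 1 | 2 => xi 2
  | 3 => bracket (xi 0) (xi 1)
  | _ => bracket (xi 1) (xi 2)
  end.

(* Let [t_i] be the tangent of half the angle from the outer normal of side [i] to that of side
   [i + 1]. On a triangle the [t_i] are positive, the half-angles sum to zero, so that
   [t_2 = (t_0 + t_1) / (t_0 t_1 - 1)], and the perimeter equals [sum_i (p_i + p_(i+1)) t_i];
   hence its differential is an explicit linear form whose [p_1]-coefficient is [t_0 + t_1 > 0],
   and each [Phi_i] is a rational function of the [t]'s and [p]'s.
   In the coordinates [(alpha_0, alpha_1, alpha_2, p_0, p_1, p_2)] the field [xi_i] is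
   [e_(alpha_i) + Phi_i e_(p_i)], while [[xi_0, xi_1]] lives on [(p_0, p_1)] and [[xi_1, xi_2]]
   on [(p_1, p_2)], with [p_0]- resp. [p_2]-component a nonzero multiple of the perimeter. The
   five vectors are thus triangular, hence independent; each is annihilated by the differential
   (a rational identity once [t_2] is eliminated); and subtracting from a kernel vector the
   evident combination of them leaves a kernel vector along [e_(p_1)], which must vanish. *)

From Stdlib Require Import Reals Lra Lia.
From Coquelicot Require Import Coquelicot.
Open Scope R_scope.

Lemma locally_pos_of_ex_derive (f : R -> R) (x : R) :
  ex_derive f x -> 0 < f x -> locally x (fun t => 0 < f t).
Proof.
  intros Hd Hpos. apply ex_derive_continuous in Hd.
  apply Hd. exists (mkposreal _ Hpos). intros y Hy.
  apply Rabs_lt_between' in Hy. simpl in Hy. lra.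
Qed.

Lemma locally_neq0_of_ex_derive (f : R -> R) (x : R) :
  ex_derive f x -> f x <> 0 -> locally x (fun t => f t <> 0).
Proof.
  intros Hd Hnz. destruct (Rlt_or_le 0 (f x)) as [Hpos | Hneg].
  - apply (filter_imp (fun t => 0 < f t)); [intros t Ht; lra|].
    exact (locally_pos_of_ex_derive f x Hd Hpos).
  - apply (filter_imp (fun t => 0 < - f t)); [intros t Ht; lra|].
    apply locally_pos_of_ex_derive; [exact (ex_derive_opp f x Hd) | lra].
Qed.

Lemma cos_half_neq0 (g : R) : sin g <> 0 -> cos (g / 2) <> 0.
Proof.
  intros Hs Hc. apply Hs. replace g with (2 * (g / 2)) by field.
  rewrite sin_2a, Hc. ring.
Qed.

Lemma tan_half_pos (g : R) : 0 < sin g -> 0 < tan (g / 2).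
Proof.
  intros Hs. assert (Hc := cos_half_neq0 g ltac:(lra)).
  replace g with (2 * (g / 2)) in Hs by field. rewrite sin_2a in Hs.
  unfold tan. replace (sin (g / 2) / cos (g / 2))
    with (2 * sin (g / 2) * cos (g / 2) / (2 * cos (g / 2) ^ 2)) by (field; auto).
  apply Rdiv_lt_0_compat; [lra|]. assert (0 < cos (g / 2) ^ 2) by (apply pow2_gt_0; auto). lra.
Qed.

Lemma tan_half (g : R) : sin g <> 0 -> tan (g / 2) = (1 - cos g) / sin g.
Proof.
  intros Hs. set (h := g / 2). assert (Eg : g = 2 * h) by (unfold h; field).
  rewrite Eg in Hs |- *. rewrite sin_2a, cos_2a_sin in *.
  unfold tan. field. split; intro E; apply Hs; rewrite E; ring.
Qed.

Lemma tan_sq_plus1 (u : R) : cos u <> 0 -> 1 + tan u ^ 2 = / cos u ^ 2.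
Proof.
  intros Hc. assert (E := sin2_cos2 u). unfold Rsqr in E. unfold tan.
  replace (1 + (sin u / cos u) ^ 2) with ((sin u * sin u + cos u * cos u) / cos u ^ 2)
    by (field; exact Hc).
  rewrite E. field. exact Hc.
Qed.

(* The addition formula expresses [tan c]; its positivity forces [tan a * tan b > 1]. *)
Lemma tan_zero_sum (a b c : R) :
  a + b + c = 0 -> cos a <> 0 -> cos b <> 0 -> cos c <> 0 ->
  0 < tan a -> 0 < tan b -> 0 < tan c ->
  1 < tan a * tan b /\ tan c = (tan a + tan b) / (tan a * tan b - 1).
Proof.
  intros Hsum Ha Hb Hc Pa Pb Pc.
  assert (Ec : c = - (a + b)) by lra. rewrite Ec in Hc, Pc |- *.
  rewrite cos_neg in Hc. rewrite tan_neg in Pc |- *.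
  assert (Hab : 1 - tan a * tan b <> 0).
  { intro E. apply Hc. rewrite cos_plus.
    replace (cos a * cos b - sin a * sin b) with (cos a * cos b * (1 - tan a * tan b))
      by (unfold tan; field; auto).
    rewrite E. ring. }
  rewrite tan_plus in Pc |- * by auto.
  split.
  - destruct (Rlt_or_le 1 (tan a * tan b)) as [H|H]; [exact H|].
    exfalso. assert (0 < (tan a + tan b) / (1 - tan a * tan b)).
    { apply Rdiv_lt_0_compat; lra. }
    lra.
  - field. split; [|exact Hab]. intro E. apply Hab. lra.
Qed.

(* Indices are taken mod 3: [hgap x 2 = (al x 0 - al x 2) / 2]. *)
Definition hgap (x : pt) (i : nat) : R := (al x (i + 1) - al x i) / 2.
Definition tgap (x : pt) (i : nat) : R := tan (hgap x i).

Lemma al_add3 (x : pt) (i : nat) : al x (i + 3) = al x i.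
Proof.
  unfold al. f_equal. rewrite <- Nat.Div0.add_mod_idemp_r. now rewrite Nat.add_0_r.
Qed.

Lemma hgap_line (x v : pt) (t : R) (i : nat) :
  hgap (fun k => x k + t * v k) i = hgap x i + t * hgap v i.
Proof. unfold hgap, al. field. Qed.

Lemma hgap_sum (x : pt) : hgap x 0 + hgap x 1 + hgap x 2 = 0.
Proof. unfold hgap, al. simpl. field. Qed.

Lemma in_P3_gap_pos (x : pt) : in_P3 x -> forall i, 0 < sin (2 * hgap x i).
Proof.
  intros [H0 [H1 [H2 _]]] i.
  replace (2 * hgap x i) with (al x (i mod 3 + 1) - al x (i mod 3)).
  2:{ unfold hgap, al. rewrite Nat.Div0.add_mod_idemp_l, Nat.Div0.mod_mod. field. }
  assert (Hi : (i mod 3 < 3)%nat) by (apply Nat.mod_upper_bound; lia).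
  destruct (i mod 3) as [|[|[|n]]]; [exact H0 | exact H1 | exact H2 | lia].
Qed.

Lemma in_P3_tgap_pos (x : pt) : in_P3 x -> forall i, cos (hgap x i) <> 0 /\ 0 < tgap x i.
Proof.
  intros Hx i. assert (Hs := in_P3_gap_pos x Hx i).
  unfold tgap. replace (hgap x i) with (2 * hgap x i / 2) by field.
  split; [apply cos_half_neq0; lra | apply tan_half_pos; exact Hs].
Qed.

Lemma in_P3_tgap_relation (x : pt) :
  in_P3 x ->
  1 < tgap x 0 * tgap x 1 /\ tgap x 2 = (tgap x 0 + tgap x 1) / (tgap x 0 * tgap x 1 - 1).
Proof.
  intros Hx.
  destruct (in_P3_tgap_pos x Hx 0) as [C0 P0]. destruct (in_P3_tgap_pos x Hx 1) as [C1 P1].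
  destruct (in_P3_tgap_pos x Hx 2) as [C2 P2].
  apply tan_zero_sum; auto. apply hgap_sum.
Qed.

Definition Phi_half (u v A B : R) : R :=
  (cos u ^ 2 * A - cos v ^ 2 * B) / (2 * sin (u + v) * cos u * cos v).

Lemma Phi_eq_Phi_half (i : nat) (x : pt) :
  Phi i x = Phi_half (hgap x (i + 2)) (hgap x i) (pp x (i + 1) + pp x i) (pp x (i + 2) + pp x i).
Proof.
  unfold Phi, Phi_half, hgap. cbv zeta.
  replace (i + 2 + 1)%nat with (i + 3)%nat by lia. rewrite al_add3.
  replace ((al x i - al x (i + 2)) / 2 + (al x (i + 1) - al x i) / 2)
    with ((al x (i + 1) - al x (i + 2)) / 2) by field.
  reflexivity.
Qed.

Definition Phi_tan (Tu Tv A B : R) : R := ((1 + Tv ^ 2) * A - (1 + Tu ^ 2) * B) / (2 * (Tu + Tv)).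

Definition Phi_tan_deriv (Tu Tv A B du dv dA dB : R) : R :=
  ((2 * Tv * (1 + Tv ^ 2) * dv * A + (1 + Tv ^ 2) * dA
    - 2 * Tu * (1 + Tu ^ 2) * du * B - (1 + Tu ^ 2) * dB) * (2 * (Tu + Tv))
   - ((1 + Tv ^ 2) * A - (1 + Tu ^ 2) * B) * (2 * ((1 + Tu ^ 2) * du + (1 + Tv ^ 2) * dv)))
  / (2 * (Tu + Tv)) ^ 2.

Lemma sin_add_neq0 (u v : R) :
  cos u <> 0 -> cos v <> 0 -> tan u + tan v <> 0 -> sin u * cos v + sin v * cos u <> 0.
Proof.
  intros Hu Hv Ht E. apply Ht. unfold tan.
  replace (sin u / cos u + sin v / cos v) with ((sin u * cos v + sin v * cos u) / (cos u * cos v))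
    by (field; auto).
  rewrite E. unfold Rdiv. ring.
Qed.

Lemma Phi_half_eq_tan (u v A B : R) :
  cos u <> 0 -> cos v <> 0 -> tan u + tan v <> 0 -> Phi_half u v A B = Phi_tan (tan u) (tan v) A B.
Proof.
  intros Hu Hv Ht. assert (Hs := sin_add_neq0 u v Hu Hv Ht).
  unfold Phi_half, Phi_tan. rewrite !tan_sq_plus1 by auto. rewrite sin_plus.
  unfold tan in *. field. repeat split; auto.
Qed.

Lemma is_derive_Phi_tan_comp_tan (u v A B du dv dA dB : R) :
  cos u <> 0 -> cos v <> 0 -> tan u + tan v <> 0 ->
  is_derive (fun t => Phi_tan (tan (u + t * du)) (tan (v + t * dv)) (A + t * dA) (B + t * dB)) 0
    (Phi_tan_deriv (tan u) (tan v) A B du dv dA dB).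
Proof.
  intros Hu Hv Ht. assert (Hs := sin_add_neq0 u v Hu Hv Ht).
  unfold Phi_tan, Phi_tan_deriv, tan in *. auto_derive; rewrite !Rmult_0_l, !Rplus_0_r.
  - repeat split; auto.
  - field. repeat split; auto.
Qed.

Lemma is_derive_Phi_half (u v A B du dv dA dB : R) :
  cos u <> 0 -> cos v <> 0 -> tan u + tan v <> 0 ->
  is_derive (fun t => Phi_half (u + t * du) (v + t * dv) (A + t * dA) (B + t * dB)) 0
    (Phi_tan_deriv (tan u) (tan v) A B du dv dA dB).
Proof.
  intros Hu Hv Ht.
  apply is_derive_ext_loc with
    (f := fun t => Phi_tan (tan (u + t * du)) (tan (v + t * dv)) (A + t * dA) (B + t * dB)).
  2: now apply is_derive_Phi_tan_comp_tan.
  assert (Cu : locally 0 (fun t => cos (u + t * du) <> 0)).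
  { apply (locally_neq0_of_ex_derive (fun t => cos (u + t * du))); [auto_derive|]; auto.
    now rewrite Rmult_0_l, Rplus_0_r. }
  assert (Cv : locally 0 (fun t => cos (v + t * dv) <> 0)).
  { apply (locally_neq0_of_ex_derive (fun t => cos (v + t * dv))); [auto_derive|]; auto.
    now rewrite Rmult_0_l, Rplus_0_r. }
  assert (Ct : locally 0 (fun t => tan (u + t * du) + tan (v + t * dv) <> 0)).
  { apply (locally_neq0_of_ex_derive (fun t => tan (u + t * du) + tan (v + t * dv))).
    - unfold tan. auto_derive. now rewrite !Rmult_0_l, !Rplus_0_r.
    - now rewrite !Rmult_0_l, !Rplus_0_r. }
  generalize (filter_and _ _ Cu (filter_and _ _ Cv Ct)). apply filter_imp.
  intros t [H1 [H2 H3]]. symmetry. now apply Phi_half_eq_tan.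
Qed.

Definition Phi_tan_at (x : pt) (i : nat) : R :=
  Phi_tan (tgap x (i + 2)) (tgap x i) (pp x (i + 1) + pp x i) (pp x (i + 2) + pp x i).

Lemma in_P3_tgap_sum_neq0 (x : pt) (i j : nat) : in_P3 x -> tgap x i + tgap x j <> 0.
Proof.
  intros Hx. assert (Hi := proj2 (in_P3_tgap_pos x Hx i)).
  assert (Hj := proj2 (in_P3_tgap_pos x Hx j)). lra.
Qed.

Lemma Phi_eq_tan_at (x : pt) (i : nat) : in_P3 x -> Phi i x = Phi_tan_at x i.
Proof.
  intros Hx. rewrite Phi_eq_Phi_half. apply Phi_half_eq_tan.
  - exact (proj1 (in_P3_tgap_pos x Hx (i + 2))).
  - exact (proj1 (in_P3_tgap_pos x Hx i)).
  - exact (in_P3_tgap_sum_neq0 x (i + 2) i Hx).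
Qed.

Lemma dirD_Phi (x v : pt) (i : nat) : in_P3 x ->
  dirD (Phi i) x v =
  Phi_tan_deriv (tgap x (i + 2)) (tgap x i) (pp x (i + 1) + pp x i) (pp x (i + 2) + pp x i)
      (hgap v (i + 2)) (hgap v i) (pp v (i + 1) + pp v i) (pp v (i + 2) + pp v i).
Proof.
  intros Hx. unfold dirD. apply is_derive_unique.
  apply (is_derive_ext (fun t => Phi_half
           (hgap x (i + 2) + t * hgap v (i + 2)) (hgap x i + t * hgap v i)
           (pp x (i + 1) + pp x i + t * (pp v (i + 1) + pp v i))
           (pp x (i + 2) + pp x i + t * (pp v (i + 2) + pp v i)))).
  { intros t. rewrite Phi_eq_Phi_half, !hgap_line. unfold pp. f_equal; ring. }
  apply is_derive_Phi_half.
  - exact (proj1 (in_P3_tgap_pos x Hx (i + 2))).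
  - exact (proj1 (in_P3_tgap_pos x Hx i)).
  - exact (in_P3_tgap_sum_neq0 x (i + 2) i Hx).
Qed.

Lemma dirD_const (c : R) (x v : pt) : dirD (fun _ => c) x v = 0.
Proof. unfold dirD. apply Derive_const. Qed.

Lemma dirD_xi (j k : nat) (x v : pt) :
  dirD (fun y => xi j y k) x v = if (k =? 3 + j)%nat then dirD (Phi j) x v else 0.
Proof.
  unfold xi. destruct (k =? j)%nat eqn:Ekj.
  - apply Nat.eqb_eq in Ekj. subst k.
    replace (j =? 3 + j)%nat with false by (symmetry; apply Nat.eqb_neq; lia).
    apply dirD_const.
  - destruct (k =? 3 + j)%nat; [reflexivity | apply dirD_const].
Qed.

Lemma bracket_xi (i j : nat) (x : pt) (k : nat) :
  bracket (xi i) (xi j) x k =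
  (if (k =? 3 + j)%nat then dirD (Phi j) x (xi i x) else 0)
  - (if (k =? 3 + i)%nat then dirD (Phi i) x (xi j x) else 0).
Proof. unfold bracket. now rewrite !dirD_xi. Qed.

(* Length of the side on the line with normal angle [b] and support [q], between its
   intersections with the lines [(a, p)] and [(c, r)]: the distance of the two vertices, and
   the closed form it equals on a genuine triangle. *)
Definition side_dist (a b c p q r : R) : R :=
  sqrt (((q * sin c - r * sin b) / sin (c - b) - (p * sin b - q * sin a) / sin (b - a)) ^ 2
        + ((cos b * r - cos c * q) / sin (c - b) - (cos a * q - cos b * p) / sin (b - a)) ^ 2).

Definition side_lin (a b c p q r : R) : R :=
  (p - q * cos (b - a)) / sin (b - a) + (r - q * cos (c - b)) / sin (c - b).

Lemma side_dist_eq_lin (a b c p q r : R) :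
  sin (b - a) <> 0 -> sin (c - b) <> 0 -> 0 <= side_lin a b c p q r ->
  side_dist a b c p q r = side_lin a b c p q r.
Proof.
  intros H1 H2 H3. unfold side_dist.
  set (d := b - a) in *. set (e := c - b) in *.
  assert (EA : a = b - d) by (unfold d; ring).
  assert (EC : c = b + e) by (unfold e; ring).
  assert (E : sin b ^ 2 + cos b ^ 2 = 1) by (rewrite <- (sin2_cos2 b); unfold Rsqr; ring).
  rewrite EA, EC, sin_minus, cos_minus, sin_plus, cos_plus.
  match goal with
  | |- sqrt ?S = _ => replace S with (side_lin a b c p q r ^ 2 * (sin b ^ 2 + cos b ^ 2))
  end.
  2:{ unfold side_lin. fold d e. field. auto. }
  rewrite E, Rmult_1_r, <- EA, <- EC. apply sqrt_pow2. exact H3.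
Qed.

(* Subtracting the support values [u cos + w sin] of an interior point writes the closed form as
   a sum of three positive terms. *)
Lemma side_lin_pos (a b c p q r u w : R) :
  sin (b - a) > 0 -> sin (c - b) > 0 -> sin (a - c) > 0 ->
  u * cos a + w * sin a < p -> u * cos b + w * sin b < q -> u * cos c + w * sin c < r ->
  0 < side_lin a b c p q r.
Proof.
  intros H1 H2 H3 HP HQ HR. unfold side_lin.
  set (d := b - a) in *. set (e := c - b) in *.
  assert (EA : a = b - d) by (unfold d; ring).
  assert (EC : c = b + e) by (unfold e; ring).
  assert (E3 : a - c = - (d + e)) by (unfold d, e; ring).
  rewrite E3, sin_neg, sin_plus in H3.
  rewrite EA, EC, sin_minus, cos_minus, sin_plus, cos_plus in *.
  set (qP := p - (u * (cos b * cos d + sin b * sin d) + w * (sin b * cos d - cos b * sin d))).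
  set (qQ := q - (u * cos b + w * sin b)).
  set (qR := r - (u * (cos b * cos e - sin b * sin e) + w * (sin b * cos e + cos b * sin e))).
  replace ((p - q * cos d) / sin d + (r - q * cos e) / sin e) with
    (qP / sin d + qR / sin e + qQ * (- (sin d * cos e + cos d * sin e)) / (sin d * sin e)).
  2:{ unfold qP, qQ, qR. field. split; lra. }
  assert (0 < qP / sin d) by (apply Rdiv_lt_0_compat; unfold qP; lra).
  assert (0 < qR / sin e) by (apply Rdiv_lt_0_compat; unfold qR; lra).
  assert (0 < qQ * (- (sin d * cos e + cos d * sin e)) / (sin d * sin e)).
  { apply Rdiv_lt_0_compat; apply Rmult_lt_0_compat; unfold qQ; lra. }
  lra.
Qed.

Lemma side_lin_sum (a b c p q r : R) :
  sin (b - a) <> 0 -> sin (c - b) <> 0 -> sin (a - c) <> 0 ->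
  side_lin a b c p q r + side_lin b c a q r p + side_lin c a b r p q =
  (p + q) * tan ((b - a) / 2) + (q + r) * tan ((c - b) / 2) + (r + p) * tan ((a - c) / 2).
Proof.
  intros H1 H2 H3. rewrite !tan_half by auto. unfold side_lin. field. auto.
Qed.

Lemma perimeter_sides (y : pt) :
  perimeter y = side_dist (y 0%nat) (y 1%nat) (y 2%nat) (y 3%nat) (y 4%nat) (y 5%nat)
    + side_dist (y 1%nat) (y 2%nat) (y 0%nat) (y 4%nat) (y 5%nat) (y 3%nat)
    + side_dist (y 2%nat) (y 0%nat) (y 1%nat) (y 5%nat) (y 3%nat) (y 4%nat).
Proof. reflexivity. Qed.

Lemma in_P3_sin_pos (y : pt) : in_P3 y ->
  sin (y 1%nat - y 0%nat) > 0 /\ sin (y 2%nat - y 1%nat) > 0 /\ sin (y 0%nat - y 2%nat) > 0.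
Proof. intros [H0 [H1 [H2 _]]]. now repeat split. Qed.

Lemma in_P3_side_lin_pos (y : pt) : in_P3 y ->
  0 < side_lin (y 0%nat) (y 1%nat) (y 2%nat) (y 3%nat) (y 4%nat) (y 5%nat) /\
  0 < side_lin (y 1%nat) (y 2%nat) (y 0%nat) (y 4%nat) (y 5%nat) (y 3%nat) /\
  0 < side_lin (y 2%nat) (y 0%nat) (y 1%nat) (y 5%nat) (y 3%nat) (y 4%nat).
Proof.
  intros Hy. destruct (in_P3_sin_pos y Hy) as [H0 [H1 H2]].
  destruct Hy as [_ [_ [_ [u [w Hi]]]]].
  assert (I0 := Hi 0%nat ltac:(lia)). assert (I1 := Hi 1%nat ltac:(lia)).
  assert (I2 := Hi 2%nat ltac:(lia)).
  repeat split; eapply side_lin_pos; eassumption.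
Qed.

Definition per_tan (y : pt) : R :=
  (y 3%nat + y 4%nat) * tgap y 0 + (y 4%nat + y 5%nat) * tgap y 1 + (y 5%nat + y 3%nat) * tgap y 2.

Lemma perimeter_eq_per_tan (y : pt) : in_P3 y -> perimeter y = per_tan y.
Proof.
  intros Hy. destruct (in_P3_side_lin_pos y Hy) as [S0 [S1 S2]].
  destruct (in_P3_sin_pos y Hy) as [H0 [H1 H2]].
  rewrite perimeter_sides, !side_dist_eq_lin by lra.
  rewrite side_lin_sum by lra. reflexivity.
Qed.

Lemma per_tan_pos (y : pt) : in_P3 y -> 0 < per_tan y.
Proof.
  intros Hy. destruct (in_P3_side_lin_pos y Hy) as [S0 [S1 S2]].
  rewrite <- perimeter_eq_per_tan by exact Hy.
  destruct (in_P3_sin_pos y Hy) as [H0 [H1 H2]].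
  rewrite perimeter_sides, !side_dist_eq_lin by lra. lra.
Qed.

Lemma in_P3_line_near (x v : pt) :
  in_P3 x -> locally 0 (fun t => in_P3 (fun k => x k + t * v k)).
Proof.
  intros Hx. assert (Hgap := in_P3_gap_pos x Hx).
  destruct Hx as [_ [_ [_ [u [w Hi]]]]].
  assert (Gap : forall i, locally 0 (fun t =>
    0 < sin (al x (i + 1) + t * al v (i + 1) - (al x i + t * al v i)))).
  { intros i. apply (locally_pos_of_ex_derive
      (fun t => sin (al x (i + 1) + t * al v (i + 1) - (al x i + t * al v i)))).
    - auto_derive. exact I.
    - rewrite !Rmult_0_l, !Rplus_0_r.
      replace (al x (i + 1) - al x i) with (2 * hgap x i) by (unfold hgap; field).
      apply Hgap. }
  assert (Inner : forall i, (i < 3)%nat -> locally 0 (fun t =>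
    0 < pp x i + t * pp v i - (u * cos (al x i + t * al v i) + w * sin (al x i + t * al v i)))).
  { intros i Hi3. apply (locally_pos_of_ex_derive (fun t =>
      pp x i + t * pp v i - (u * cos (al x i + t * al v i) + w * sin (al x i + t * al v i)))).
    - auto_derive. exact I.
    - rewrite !Rmult_0_l, !Rplus_0_r. specialize (Hi i Hi3). lra. }
  assert (N0 := Inner 0%nat ltac:(lia)). assert (N1 := Inner 1%nat ltac:(lia)).
  assert (N2 := Inner 2%nat ltac:(lia)).
  generalize (filter_and _ _ (Gap 0%nat) (filter_and _ _ (Gap 1%nat) (filter_and _ _ (Gap 2%nat)
    (filter_and _ _ N0 (filter_and _ _ N1 N2))))).
  apply filter_imp. intros t [G0 [G1 [G2 [I0 [I1 I2]]]]].
  split; [exact G0|]. split; [exact G1|]. split; [exact G2|].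
  exists u, w. intros i Hi3.
  change (u * cos (al x i + t * al v i) + w * sin (al x i + t * al v i) < pp x i + t * pp v i).
  destruct i as [|[|[|i]]]; lra || lia.
Qed.

Definition dper_form (t0 t1 t2 p0 p1 p2 v0 v1 v2 v3 v4 v5 : R) : R :=
  (p0 + p1) * (1 + t0 ^ 2) * ((v1 - v0) / 2) + (p1 + p2) * (1 + t1 ^ 2) * ((v2 - v1) / 2)
  + (p2 + p0) * (1 + t2 ^ 2) * ((v0 - v2) / 2)
  + (v3 + v4) * t0 + (v4 + v5) * t1 + (v5 + v3) * t2.

Definition dperimeter (x v : pt) : R :=
  dper_form (tgap x 0) (tgap x 1) (tgap x 2) (x 3%nat) (x 4%nat) (x 5%nat)
    (v 0%nat) (v 1%nat) (v 2%nat) (v 3%nat) (v 4%nat) (v 5%nat).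

Lemma is_derive_per_tan (x v : pt) : in_P3 x ->
  is_derive (fun t => per_tan (fun k => x k + t * v k)) 0 (dperimeter x v).
Proof.
  intros Hx.
  destruct (in_P3_tgap_pos x Hx 0) as [C0 _]. destruct (in_P3_tgap_pos x Hx 1) as [C1 _].
  destruct (in_P3_tgap_pos x Hx 2) as [C2 _].
  apply (is_derive_ext (fun t =>
      (x 3%nat + t * v 3%nat + (x 4%nat + t * v 4%nat)) * tan (hgap x 0 + t * hgap v 0)
    + (x 4%nat + t * v 4%nat + (x 5%nat + t * v 5%nat)) * tan (hgap x 1 + t * hgap v 1)
    + (x 5%nat + t * v 5%nat + (x 3%nat + t * v 3%nat)) * tan (hgap x 2 + t * hgap v 2))).
  { intros t. unfold per_tan, tgap. now rewrite !hgap_line. }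
  unfold tan. auto_derive; rewrite ?Rmult_0_l, ?Rplus_0_r.
  - repeat split; auto.
  - unfold dperimeter, dper_form, tgap, tan, hgap, al.
    cbv [Nat.modulo Nat.divmod Nat.add Nat.sub fst snd] in *.
    field. repeat split; auto.
Qed.

Lemma dirD_perimeter (x v : pt) : in_P3 x -> dirD perimeter x v = dperimeter x v.
Proof.
  intros Hx. unfold dirD. apply is_derive_unique.
  apply is_derive_ext_loc with (f := fun t => per_tan (fun k => x k + t * v k)).
  2: now apply is_derive_per_tan.
  apply (filter_imp _ _ (fun t Ht => eq_sym (perimeter_eq_per_tan _ Ht))).
  now apply in_P3_line_near.
Qed.

Section TangentAlgebra.

Variables t0 t1 t2 p0 p1 p2 : R.
Hypotheses (Ht0 : 0 < t0) (Ht1 : 0 < t1) (Ht01 : 1 < t0 * t1)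
  (Ht2 : t2 = (t0 + t1) / (t0 * t1 - 1)).

(* The [F_i] are the values of [Phi_i]; [brij_pk] is the [p_k]-component of [[xi_i, xi_j]]. *)
Let F0 := Phi_tan t2 t0 (p1 + p0) (p2 + p0).
Let F1 := Phi_tan t0 t1 (p2 + p1) (p0 + p1).
Let F2 := Phi_tan t1 t2 (p0 + p2) (p1 + p2).

Definition br01_p0 : R := - Phi_tan_deriv t2 t0 (p1 + p0) (p2 + p0) 0 (1 / 2) F1 0.
Definition br01_p1 : R := Phi_tan_deriv t0 t1 (p2 + p1) (p0 + p1) (-1 / 2) 0 0 F0.
Definition br12_p1 : R := - Phi_tan_deriv t0 t1 (p2 + p1) (p0 + p1) 0 (1 / 2) F2 0.
Definition br12_p2 : R := Phi_tan_deriv t1 t2 (p0 + p2) (p1 + p2) (-1 / 2) 0 0 F1.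

Let per := (p0 + p1) * t0 + (p1 + p2) * t1 + (p2 + p0) * t2.

Lemma t2_pos : 0 < t2.
Proof. rewrite Ht2. apply Rdiv_lt_0_compat; lra. Qed.

Lemma t_products_gt1 : 1 < t1 * t2 /\ 1 < t2 * t0.
Proof.
  assert (E1 : t1 * t2 - 1 = (1 + t1 ^ 2) / (t0 * t1 - 1)) by (rewrite Ht2; field; lra).
  assert (E2 : t2 * t0 - 1 = (1 + t0 ^ 2) / (t0 * t1 - 1)) by (rewrite Ht2; field; lra).
  assert (0 < (1 + t1 ^ 2) / (t0 * t1 - 1)) by (apply Rdiv_lt_0_compat; nra).
  assert (0 < (1 + t0 ^ 2) / (t0 * t1 - 1)) by (apply Rdiv_lt_0_compat; nra).
  lra.
Qed.

Lemma dper_form_xi0 : dper_form t0 t1 t2 p0 p1 p2 1 0 0 F0 0 0 = 0.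
Proof. pose proof t2_pos. unfold dper_form, F0, Phi_tan. field. lra. Qed.

Lemma dper_form_xi1 : dper_form t0 t1 t2 p0 p1 p2 0 1 0 0 F1 0 = 0.
Proof. unfold dper_form, F1, Phi_tan. field. lra. Qed.

Lemma dper_form_xi2 : dper_form t0 t1 t2 p0 p1 p2 0 0 1 0 0 F2 = 0.
Proof. pose proof t2_pos. unfold dper_form, F2, Phi_tan. field. lra. Qed.

Lemma dper_form_br01 : dper_form t0 t1 t2 p0 p1 p2 0 0 0 br01_p0 br01_p1 0 = 0.
Proof.
  pose proof t2_pos. unfold dper_form, br01_p0, br01_p1, F0, F1, Phi_tan, Phi_tan_deriv.
  subst t2. field. repeat split; nra.
Qed.

Lemma dper_form_br12 : dper_form t0 t1 t2 p0 p1 p2 0 0 0 0 br12_p1 br12_p2 = 0.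
Proof.
  pose proof t2_pos. unfold dper_form, br12_p1, br12_p2, F1, F2, Phi_tan, Phi_tan_deriv.
  subst t2. field. repeat split; nra.
Qed.

Lemma br01_p0_eq :
  br01_p0 = - (1 + t0 ^ 2) * (1 + t1 ^ 2) * (1 + t2 ^ 2) * per
            / (4 * (t2 + t0) ^ 2 * (t0 + t1) * (t1 * t2 - 1)).
Proof.
  pose proof t2_pos. destruct t_products_gt1.
  unfold br01_p0, per, F1, Phi_tan, Phi_tan_deriv. subst t2. field. repeat split; nra.
Qed.

Lemma br12_p2_eq :
  br12_p2 = (1 + t0 ^ 2) * (1 + t1 ^ 2) * (1 + t2 ^ 2) * per
            / (4 * (t0 + t1) * (t1 + t2) ^ 2 * (t2 * t0 - 1)).
Proof.
  pose proof t2_pos. destruct t_products_gt1.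
  unfold br12_p2, per, F1, Phi_tan, Phi_tan_deriv. subst t2. field. repeat split; nra.
Qed.

Lemma br01_p0_neq0 : 0 < per -> br01_p0 <> 0.
Proof.
  intros Hper. rewrite br01_p0_eq. pose proof t2_pos. destruct t_products_gt1.
  assert (0 < (1 + t0 ^ 2) * (1 + t1 ^ 2) * (1 + t2 ^ 2) * per
              / (4 * (t2 + t0) ^ 2 * (t0 + t1) * (t1 * t2 - 1))).
  { apply Rdiv_lt_0_compat; repeat apply Rmult_lt_0_compat; nra. }
  unfold Rdiv in *. lra.
Qed.

Lemma br12_p2_neq0 : 0 < per -> br12_p2 <> 0.
Proof.
  intros Hper. rewrite br12_p2_eq. pose proof t2_pos. destruct t_products_gt1.
  assert (0 < (1 + t0 ^ 2) * (1 + t1 ^ 2) * (1 + t2 ^ 2) * per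
              / (4 * (t0 + t1) * (t1 + t2) ^ 2 * (t2 * t0 - 1))).
  { apply Rdiv_lt_0_compat; repeat apply Rmult_lt_0_compat; nra. }
  lra.
Qed.

End TangentAlgebra.

Definition gen_coord (x : pt) (j k : nat) : R :=
  let t0 := tgap x 0 in let t1 := tgap x 1 in let t2 := tgap x 2 in
  let p0 := x 3%nat in let p1 := x 4%nat in let p2 := x 5%nat in
  match j, k with
  | 0, 0 | 1, 1 | 2, 2 => 1
  | 0, 3 => Phi_tan_at x 0
  | 1, 4 => Phi_tan_at x 1
  | 2, 5 => Phi_tan_at x 2
  | 3, 3 => br01_p0 t0 t1 t2 p0 p1 p2
  | 3, 4 => br01_p1 t0 t1 t2 p0 p1 p2
  | 4, 4 => br12_p1 t0 t1 t2 p0 p1 p2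
  | 4, 5 => br12_p2 t0 t1 t2 p0 p1 p2
  | _, _ => 0
  end.

Lemma gen_coord_eq (x : pt) : in_P3 x ->
  forall j k, (j < 5)%nat -> (k < 6)%nat -> gen j x k = gen_coord x j k.
Proof.
  intros Hx j k Hj Hk.
  destruct j as [|[|[|[|[|j]]]]]; try lia; destruct k as [|[|[|[|[|[|k]]]]]]; try lia;
    cbn [gen gen_coord]; rewrite ?bracket_xi; cbn [Nat.eqb Nat.add];
    rewrite ?dirD_Phi by exact Hx; unfold xi, hgap, al, pp;
    cbv [Nat.modulo Nat.divmod Nat.add Nat.sub fst snd Nat.eqb];
    rewrite ?Phi_eq_tan_at by exact Hx;
    unfold br01_p0, br01_p1, br12_p1, br12_p2, Phi_tan_at, tgap, hgap, al, pp;
    cbv [Nat.modulo Nat.divmod Nat.add Nat.sub fst snd Nat.eqb];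
    (* bracket entries agree with [brij_pk] up to normalizing arguments like [(1 - 0) / 2] *)
    first [ reflexivity | ring
          | rewrite Rminus_0_l; do 2 f_equal; try reflexivity; field
          | rewrite Rminus_0_r; f_equal; try reflexivity; field ].
Qed.

Lemma sum_gen_coord (x : pt) (c : nat -> R) (k : nat) : in_P3 x -> (k < 6)%nat ->
  sum_f_R0 (fun j => c j * gen j x k) 4 = sum_f_R0 (fun j => c j * gen_coord x j k) 4.
Proof.
  intros Hx Hk. apply sum_eq. intros j Hj. now rewrite (gen_coord_eq x Hx) by lia.
Qed.

Lemma dperimeter_gen (x : pt) (j : nat) : in_P3 x -> (j < 5)%nat -> dperimeter x (gen j x) = 0.
Proof.
  intros Hx Hj.
  destruct (in_P3_tgap_pos x Hx 0) as [_ P0]. destruct (in_P3_tgap_pos x Hx 1) as [_ P1].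
  destruct (in_P3_tgap_relation x Hx) as [P01 E2].
  unfold dperimeter. rewrite !(gen_coord_eq x Hx j) by lia.
  destruct j as [|[|[|[|[|j]]]]]; try lia; cbn [gen_coord].
  - now apply dper_form_xi0.
  - now apply dper_form_xi1.
  - now apply dper_form_xi2.
  - now apply dper_form_br01.
  - now apply dper_form_br12.
Qed.

Lemma in_P3_bracket_pivots (x : pt) : in_P3 x ->
  gen_coord x 3 3 <> 0 /\ gen_coord x 4 5 <> 0.
Proof.
  intros Hx. cbn [gen_coord].
  destruct (in_P3_tgap_pos x Hx 0) as [_ P0]. destruct (in_P3_tgap_pos x Hx 1) as [_ P1].
  destruct (in_P3_tgap_relation x Hx) as [P01 E2].
  assert (Hper := per_tan_pos x Hx). unfold per_tan in Hper.
  split; [apply br01_p0_neq0 | apply br12_p2_neq0]; auto.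
Qed.

Lemma gen_independent (x : pt) (c : nat -> R) : in_P3 x ->
  (forall k, (k < 6)%nat -> sum_f_R0 (fun j => c j * gen j x k) 4 = 0) ->
  forall j, (j < 5)%nat -> c j = 0.
Proof.
  intros Hx Hc. destruct (in_P3_bracket_pivots x Hx) as [A3 E5].
  assert (K : forall k, (k < 6)%nat -> sum_f_R0 (fun j => c j * gen_coord x j k) 4 = 0).
  { intros k Hk. rewrite <- sum_gen_coord by assumption. now apply Hc. }
  assert (K0 := K 0%nat ltac:(lia)). assert (K1 := K 1%nat ltac:(lia)).
  assert (K2 := K 2%nat ltac:(lia)). assert (K3 := K 3%nat ltac:(lia)).
  assert (K5 := K 5%nat ltac:(lia)).
  cbn [sum_f_R0] in K0, K1, K2, K3, K5. cbn [gen_coord] in K0, K1, K2, K3, K5, A3, E5.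
  assert (c0 : c 0%nat = 0) by lra. assert (c1 : c 1%nat = 0) by lra.
  assert (c2 : c 2%nat = 0) by lra.
  rewrite c0 in K3. rewrite c2 in K5.
  assert (c3 : c 3%nat = 0) by (eapply Rmult_eq_reg_r; [|exact A3]; lra).
  assert (c4 : c 4%nat = 0) by (eapply Rmult_eq_reg_r; [|exact E5]; lra).
  intros j Hj. destruct j as [|[|[|[|[|j]]]]]; auto; lia.
Qed.

Lemma dperimeter_residual (x w : pt) (c : nat -> R) (g : nat -> pt) :
  dperimeter x (fun k => w k - sum_f_R0 (fun j => c j * g j k) 4) =
  dperimeter x w - sum_f_R0 (fun j => c j * dperimeter x (g j)) 4.
Proof. unfold dperimeter, dper_form. cbv beta. cbn [sum_f_R0]. field. Qed.

Lemma dperimeter_supported_at4 (x rho : pt) :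
  (forall k, (k < 6)%nat -> k <> 4%nat -> rho k = 0) ->
  dperimeter x rho = (tgap x 0 + tgap x 1) * rho 4%nat.
Proof.
  intros H. unfold dperimeter, dper_form.
  rewrite (H 0%nat), (H 1%nat), (H 2%nat), (H 3%nat), (H 5%nat) by lia. field.
Qed.

(* The first three coefficients are read off the angle coordinates and the bracket coefficients
   off the pivots at [p_0] and [p_2]; the residual is then a multiple of [e_4] in the kernel of
   [dperimeter x], whose [p_1]-coefficient [tgap x 0 + tgap x 1] is positive. *)
Lemma dperimeter_ker_in_span (x w : pt) : in_P3 x -> dperimeter x w = 0 ->
  exists c : nat -> R, forall k, (k < 6)%nat -> w k = sum_f_R0 (fun j => c j * gen j x k) 4.
Proof.
  intros Hx Hw. destruct (in_P3_bracket_pivots x Hx) as [A3 E5].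
  set (c := fun j => match j with
    | 0 => w 0%nat | 1 => w 1%nat | 2 => w 2%nat
    | 3 => (w 3%nat - w 0%nat * gen_coord x 0 3) / gen_coord x 3 3
    | _ => (w 5%nat - w 2%nat * gen_coord x 2 5) / gen_coord x 4 5 end).
  set (rho := fun k => w k - sum_f_R0 (fun j => c j * gen j x k) 4).
  assert (Off4 : forall k, (k < 6)%nat -> k <> 4%nat -> rho k = 0).
  { intros k Hk H4. unfold rho. rewrite sum_gen_coord by assumption.
    cbn [sum_f_R0]. unfold c.
    destruct k as [|[|[|[|[|[|k]]]]]]; try lia; cbn [gen_coord] in *; field; auto. }
  assert (Hrho : dperimeter x rho = 0).
  { unfold rho. rewrite dperimeter_residual, Hw. cbn [sum_f_R0].
    rewrite !dperimeter_gen by (exact Hx || lia). ring. }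
  assert (rho4 : rho 4%nat = 0).
  { rewrite dperimeter_supported_at4 in Hrho by exact Off4.
    destruct (in_P3_tgap_pos x Hx 0) as [_ P0]. destruct (in_P3_tgap_pos x Hx 1) as [_ P1].
    apply Rmult_integral in Hrho. destruct Hrho; [lra | assumption]. }
  exists c. intros k Hk.
  destruct (Nat.eq_dec k 4) as [-> | H4].
  - unfold rho in rho4. lra.
  - specialize (Off4 k Hk H4). unfold rho in Off4. lra.
Qed.

Theorem mainTheorem12 :
  forall (L : R) (x : pt), in_P3 x -> perimeter x = L ->
    (forall c : nat -> R,
        (forall k : nat, (k < 6)%nat ->
           sum_f_R0 (fun j => c j * gen j x k) 4 = 0) ->
        forall j : nat, (j < 5)%nat -> c j = 0)
    /\ (forall j : nat, (j < 5)%nat -> dirD perimeter x (gen j x) = 0)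
    /\ (forall w : pt, dirD perimeter x w = 0 ->
          exists c : nat -> R, forall k : nat, (k < 6)%nat ->
            w k = sum_f_R0 (fun j => c j * gen j x k) 4).
Proof.
  intros L x Hx _. split; [|split].
  - intros c. now apply gen_independent.
  - intros j Hj. rewrite dirD_perimeter by exact Hx. now apply dperimeter_gen.
  - intros w Hw. rewrite dirD_perimeter in Hw by exact Hx. now apply dperimeter_ker_in_span.
Qed.
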